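(* In the situation of a directed cycle $a_1\to b_1\to\cdots\to a_p\to b_p\to a_{p+1}=a_1$ in $\Gamma^M$ as described in the context, assume in addition that $M$ is the prefix matching generated by a diagonal matching rule $F$. Then $d_i=c_i+1$ for all $i$.
   Context: $G$ is a finite simple connected graph with distance $d$; $\ell(x_0,\dots,x_k)=\sum_{i=0}^{k-1}d(x_i,x_{i+1})$; sequences are elements of $I_{k,l}(G)=\{(x_0,\dots,x_k)\in V(G)^{k+1}:x_i\ne x_{i+1}\ \forall i,\ \ell=l\}$. $\Gamma$ is the directed graph on sequences with an edge $a\to b$ whenever $b$ is obtained from $a=(x_0,\dots,x_k)$ by deleting some $x_i$, $1\le i\le k-1$, with $\ell(b)=\ell(a)$. A matching is a set of pairwise vertex-disjoint edges of $\Gamma$; $\Gamma^M$ is $\Gamma$ with edges of $M$ reversed. Matching states: ''unmatched'', ''insert$(i,v)$'' (matched to $(x_0,\dots,x_i,v,x_{i+1},\dots,x_k)$), ''delete$(i)$'' (matched to $(x_0,\dots,\hat x_i,\dots,x_k)$). A prefix matching: whenever $(x_0,\dots,x_k)$ has state insert$(i,v)$ (resp. delete$(i)$), every sequence $(x_0,\dots,x_{i+1},y_{i+2},\dots,y_{k'})$ has the same state. A matching rule is a function $F$ from sequences to $\{\epsilon\}\cup\{\iota(v):v\in V(G)\}\cup\{\delta\}$; a prefix matching $M$ is generated by $F$ if for every sequence $(x_0,\dots,x_k)$, $k\ge1$, with unmatched prefix $(x_0,\dots,x_{k-1})$, its state is insert$(k-1,v)$ iff $F(x_0,\dots,x_k)=\iota(v)$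 and delete$(k-1)$ iff $F(x_0,\dots,x_k)=\delta$. $F$ is valid if (1) $F(x_0,\dots,x_k)=\iota(v)$ implies $v\notin\{x_{k-1},x_k\}$, $d(x_{k-1},v)+d(v,x_k)=d(x_{k-1},x_k)$, $F(x_0,\dots,x_{k-1},v)=\epsilon$, $F(x_0,\dots,x_{k-1},v,x_k)=\delta$; (2) $F(x_0,\dots,x_k)=\delta$ implies $d(x_{k-2},x_{k-1})+d(x_{k-1},x_k)=d(x_{k-2},x_k)$ and $F(x_0,\dots,x_{k-2},x_k)=\iota(x_{k-1})$. A valid $F$ is diagonal if, w.r.t. the prefix matching it generates, $F(x_0,\dots,x_k)\ne\epsilon$ for every sequence with unmatched prefix and $d(x_{k-1},x_k)\ge2$. Cycle setting: $a_i\in I_{k,l}(G)$, $b_i\in I_{k-1,l}(G)$, each $a_i\to b_i$ is an edge of $\Gamma$ not in $M$, each $b_i\to a_{i+1}$ is a reversed edge of $M$; $d_i$ is the position of the entry of $a_i$ deleted to obtain $b_i$; $a_{i+1}=(b_{i,0},\dots,b_{i,c_i},u_i,b_{i,c_i+1},\dots,b_{i,k-1})$ where $b_i=(b_{i,0},\dots,b_{i,k-1})$; indices $i$ are taken modulo $p$. *)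

From mathcomp Require Import all_boot.
Set Implicit Arguments. Unset Strict Implicit. Unset Printing Implicit Defensive.

Section Defs.
Variables (T : finType) (e : rel T).

Definition simple_connected_graph : Prop :=
  [/\ symmetric e, irreflexive e & forall x y : T, connect e x y].

Definition walkb (n : nat) (x y : T) : bool :=
  [exists t : n.-tuple T, path e x t && (last x t == y)].

(* graph distance: least n admitting a walk of length n (for a connected graph,
   it is < #|T|) *)
Definition dist (x y : T) : nat := find (fun n => walkb n x y) (iota 0 #|T|).

Fixpoint len (x : seq T) : nat :=
  match x with
  | a :: ((b :: _) as t) => dist a b + len t
  | _ => 0
  end.

Definition isseq (x : seq T) : bool :=
  (0 < size x) && sorted (fun a b => a != b) x.

Definition inI (k l : nat) (x : seq T) : bool :=
  [&& isseq x, size x == k.+1 & len x == l].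

(* (x_0,..,x_i,v,x_{i+1},..,x_k) *)
Definition ins (i : nat) (v : T) (x : seq T) : seq T :=
  take i.+1 x ++ v :: drop i.+1 x.

Definition del (i : nat) (x : seq T) : seq T := take i x ++ drop i.+1 x.

Definition gedge (a b : seq T) : Prop :=
  [/\ isseq a, isseq b &
      exists i, [/\ 0 < i, i < (size a).-1, b = del i a & len b = len a]].

Definition is_matching (M : rel (seq T)) : Prop :=
  (forall a b, M a b -> gedge a b) /\
  (forall a b a' b', M a b -> M a' b' ->
     (a = a' \/ a = b' \/ b = a' \/ b = b') -> a = a' /\ b = b').

Inductive mstate := Unmatched | Insert of nat & T | Delete of nat.

Definition has_state (M : rel (seq T)) (x : seq T) (s : mstate) : Prop :=
  match s with
  | Unmatched => forall y, ~ M x y /\ ~ M y x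
  | Insert i v => M (ins i v x) x
  | Delete i => M x (del i x)
  end.

Definition prefix_matching (M : rel (seq T)) : Prop :=
  is_matching M /\
  (forall x s, isseq x ->
     match s with Insert i _ | Delete i =>
       has_state M x s -> i.+2 <= size x ->
       forall y, isseq y -> take i.+2 y = take i.+2 x -> has_state M y s
     | Unmatched => True end).

Inductive rule := Eps | Iota of T | Delta.

Definition generated_by (F : seq T -> rule) (M : rel (seq T)) : Prop :=
  forall p z, isseq (rcons p z) -> 0 < size p -> has_state M p Unmatched ->
    (forall v, has_state M (rcons p z) (Insert (size p).-1 v) <-> F (rcons p z) = Iota v)
    /\ (has_state M (rcons p z) (Delete (size p).-1) <-> F (rcons p z) = Delta).

Definition valid_rule (F : seq T -> rule) : Prop :=
  (forall x v, isseq x -> F x = Iota v ->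
     exists p y z, x = rcons (rcons p y) z /\ [/\ v != y, v != z,
       dist y v + dist v z = dist y z,
       F (rcons (rcons p y) v) = Eps &
       F (rcons (rcons (rcons p y) v) z) = Delta])
  /\
  (forall x, isseq x -> F x = Delta ->
     exists p w y z, [/\ x = p ++ (w :: y :: z :: nil),
       dist w y + dist y z = dist w z &
       F (p ++ (w :: z :: nil)) = Iota y]).

Definition diagonal (F : seq T -> rule) (M : rel (seq T)) : Prop :=
  valid_rule F /\
  forall p y z, isseq (rcons (rcons p y) z) ->
    has_state M (rcons p y) Unmatched -> 2 <= dist y z ->
    F (rcons (rcons p y) z) <> Eps.

End Defs.

From mathcomp Require Import all_boot.
From mathcomp Require Import zify.
Set Implicit Arguments. Unset Strict Implicit. Unset Printing Implicit Defensive.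

(* Since a_i -> b_(i-1) is matched, a_i has state delete(m) for some m.  If d_i >= m+2,
   b_i shares with a_i the prefix that fixes this state, so b_i would be the source of a
   matched edge as well as the target of a_(i+1) -> b_i.  Hence d_i <= m+1, and the prefix
   (x_0,...,x_(d_i-1)) of a_i is unmatched.  The entry following it in b_i is at distance
   >= 2 from x_(d_i-1), because an entry between them was deleted without changing the
   length; so diagonality matches this prefix of b_i, and by the prefix property b_i itself,
   at position d_i - 1.  The only such state compatible with a_(i+1) -> b_i is
   insert(d_i - 1), whence c_i = d_i - 1. *)

Section Sequences.
Variable T : finType.
Implicit Types (s : seq T) (v w y z : T).

Lemma nth_sorted_neq x0 s i : sorted (fun a b => a != b) s -> i.+1 < size s ->
  nth x0 s i != nth x0 s i.+1.
Proof.
elim: s i => [|a s IH] [|i] //=.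
- by case: s IH => [|b s] //= _ /andP [].
- by move=> /path_sorted Hs Hi; apply: IH.
Qed.

Lemma isseq_take s j : isseq s -> 0 < j -> isseq (take j s).
Proof.
move=> /andP [Hs0 Hs] Hj; apply/andP; split; last exact: take_sorted.
by rewrite size_take; case: ifP => //; lia.
Qed.

Lemma size_ins i v s : size (ins i v s) = (size s).+1.
Proof. by rewrite /ins size_cat /= size_take size_drop; case: ifP; lia. Qed.

Lemma size_del i s : i < size s -> size (del i s) = (size s).-1.
Proof. by move=> Hi; rewrite /del size_cat size_take size_drop Hi; lia. Qed.

Lemma del_lt_neq s i m : isseq s -> i < m -> m < size s -> del i s <> del m s.
Proof.
move=> /andP [_ Hs] Him Hm E.
have x0 : T by case: s Hm {Hs E} => [|t].
have := congr1 (fun t => nth x0 t i) E.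
rewrite /del !nth_cat !size_takel; try lia.
rewrite ltnn subnn Him nth_drop nth_take // addn0 => Enth.
have : i.+1 < size s by lia.
by move/(nth_sorted_neq x0 Hs); rewrite Enth eqxx.
Qed.

(* The entry v sits at position i+1 of ins i v s, right before s_(i+1). *)
Lemma ins_inj i j v w s : isseq (ins i v s) -> i < size s -> j < size s ->
  ins i v s = ins j w s -> i = j.
Proof.
wlog Hij: i j v w / i < j.
  move=> W Hs Hi Hj E; case: (ltngtP i j) => // Hji; first exact: W Hs Hi Hj E.
  by apply/esym/(W j i w v) => //; rewrite -E.
move=> /andP [_ Hs] Hi Hj E; exfalso.
have nth_v : nth v (ins i v s) i.+1 = v.
  by rewrite /ins nth_cat size_takel ?ltnn ?subnn //; lia.
have nth_next : nth v (ins i v s) i.+2 = nth v s i.+1.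
  rewrite /ins nth_cat size_takel; last lia.
  by rewrite ltnNge leqnSn /= subSn // subnn /= nth_drop addn0.
have nth_other : nth v (ins j w s) i.+1 = nth v s i.+1.
  rewrite /ins nth_cat size_takel; last lia.
  by rewrite (_ : i.+1 < j.+1) ?nth_take //; lia.
have : i.+2 < size (ins i v s) by rewrite size_ins; lia.
by move/(nth_sorted_neq v Hs); rewrite nth_v nth_next -nth_other -E nth_v eqxx.
Qed.

Lemma exists_ins_del s i : 0 < i < size s -> exists v, s = ins i.-1 v (del i s).
Proof.
case/andP=> Hi0 Hi; have x0 : T by case: s Hi => [|t].
exists (nth x0 s i); rewrite /ins /del prednK //.
rewrite take_cat drop_cat size_takel ?ltnn ?subnn ?take0 ?drop0 ?cats0; last lia.
by rewrite -drop_nth // cat_take_drop.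
Qed.

Lemma take_del n d s : n <= d -> d < size s -> take n (del d s) = take n s.
Proof. by move=> Hn Hd; rewrite /del takel_cat ?take_takel // size_takel; lia. Qed.

Lemma del_size_cat P w y t : del (size P).+1 (P ++ w :: y :: t) = P ++ w :: t.
Proof. by elim: P => [|a P IH]; rewrite /del /= ?drop0 // -IH. Qed.

Lemma take_size_cat P w t : take (size P).+1 (P ++ w :: t) = rcons P w.
Proof. by elim: P => [|a P /= ->]; rewrite //= take0. Qed.

Lemma take_size_cat2 P w z t : take (size P).+2 (P ++ w :: z :: t) = rcons (rcons P w) z.
Proof. by elim: P => [|a P /= ->]; rewrite //= take0. Qed.

Lemma seq_split3 s d : 0 < d -> d.+1 < size s ->
  exists P w y z t, s = P ++ w :: y :: z :: t /\ size P = d.-1.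
Proof.
move=> Hd Hs; exists (take d.-1 s).
case E: (drop d.-1 s) => [|w [|y [|z t]]];
  try by have := size_drop d.-1 s; rewrite E /=; lia.
exists w, y, z, t; split; first by rewrite -E cat_take_drop.
by rewrite size_takel //; lia.
Qed.

End Sequences.

Section Graph.
Variables (T : finType) (e : rel T).

Lemma len_cat s w t : len e (s ++ w :: t) = len e (rcons s w) + len e (w :: t).
Proof. by elim: s => [|a [|b s] IH] //=; rewrite /= in IH; rewrite IH addnA. Qed.

Lemma dist_gt0 x y : x != y -> 0 < dist e x y.
Proof.
apply: contraNT; rewrite -eqn0Ngt /dist => /eqP.
have : 0 < #|T| by apply/card_gt0P; exists x.
case: #|T| => [|n] // _ /=; case: ifP => // /existsP [t /andP [_]].
by case: t => [[|//]] _ /= /eqP ->.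
Qed.

Lemma gedge_size_lt a b : gedge e a b -> size b < size a.
Proof.
case=> /andP [Ha _] _ [i [_ Hi -> _]]; rewrite size_del; lia.
Qed.

End Graph.

Section PrefixMatching.
Variables (T : finType) (e : rel T) (M : rel (seq T)).
Hypothesis HM : prefix_matching e M.

Lemma matching_gedge a b : M a b -> gedge e a b.
Proof. exact: HM.1.1. Qed.

Lemma matching_no_chain a b c : M a b -> M b c -> False.
Proof.
move=> Hab Hbc; have [Eab _] := HM.1.2 _ _ _ _ Hab Hbc (or_intror (or_intror (or_introl erefl))).
by have := gedge_size_lt (matching_gedge Hab); rewrite Eab ltnn.
Qed.

Lemma matching_src_inj a b b' : M a b -> M a b' -> b = b'.
Proof. by move=> Hab Hab'; case: (HM.1.2 _ _ _ _ Hab Hab' (or_introl erefl)). Qed.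

Lemma matching_tgt_inj a a' b : M a b -> M a' b -> a = a'.
Proof.
move=> Hab Hab'.
by case: (HM.1.2 _ _ _ _ Hab Hab' (or_intror (or_intror (or_intror erefl)))).
Qed.

Lemma delete_state_prefix x y i : M x (del i x) -> i.+2 <= size x ->
  isseq y -> take i.+2 y = take i.+2 x -> M y (del i y).
Proof.
move=> Hx Hi Hy Htake; have [Hsx _ _] := matching_gedge Hx.
exact: (HM.2 x (Delete T i) Hsx Hx Hi y Hy Htake).
Qed.

Lemma insert_state_prefix x y i v : M (ins i v x) x -> i.+2 <= size x ->
  isseq y -> take i.+2 y = take i.+2 x -> M (ins i v y) y.
Proof.
move=> Hx Hi Hy Htake; have [_ Hsx _] := matching_gedge Hx.
exact: (HM.2 x (Insert i v) Hsx Hx Hi y Hy Htake).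
Qed.

Lemma delete_state_unmatched_prefix x m j : M x (del m x) -> m.+1 < size x ->
  0 < j <= m.+1 -> has_state M (take j x) (Unmatched T).
Proof.
move=> Hx Hm /andP [Hj0 Hjm] z; have [Hsx _ _] := matching_gedge Hx.
have size_take_j : size (take j x) = j by rewrite size_takel //; lia.
split=> Hz; have [_ _ [i [Hi0 Hi Ez _]]] := matching_gedge Hz.
- rewrite size_take_j in Hi; rewrite Ez in Hz.
  have Hxi : M x (del i x).
    apply: (delete_state_prefix Hz) => //; first by rewrite size_take_j; lia.
    by rewrite take_takel //; lia.
  by apply: (del_lt_neq Hsx _ _ (matching_src_inj Hxi Hx)); lia.
- have Hsize : size z = j.+1 by rewrite -size_take_j Ez size_del; lia.
  have [v Ez'] : exists v, z = ins i.-1 v (del i z) by apply: exists_ins_del; lia.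
  rewrite -Ez in Ez'; rewrite Ez' in Hz.
  apply: (matching_no_chain (insert_state_prefix Hz _ Hsx _) Hx).
  + by rewrite size_take_j; lia.
  + by rewrite take_takel //; lia.
Qed.

Lemma delete_target_le x m d a : M x (del m x) -> m.+1 < size x -> d < size x ->
  M a (del d x) -> d <= m.+1.
Proof.
move=> Hx Hm Hd Ha; rewrite leqNgt; apply/negP => Hmd.
have [_ Hsd _] := matching_gedge Ha.
exact: (matching_no_chain Ha (delete_state_prefix Hx Hm Hsd (take_del Hmd Hd))).
Qed.

End PrefixMatching.

Section DiagonalRule.
Variables (T : finType) (e : rel T) (F : seq T -> rule T) (M : rel (seq T)).
Hypotheses (HM : prefix_matching e M) (HF : generated_by F M) (Hdiag : diagonal e F M).

Lemma diagonal_matched P w z : isseq (rcons (rcons P w) z) ->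
  has_state M (rcons P w) (Unmatched T) -> 2 <= dist e w z ->
  (exists v, M (ins (size P) v (rcons (rcons P w) z)) (rcons (rcons P w) z))
  \/ M (rcons (rcons P w) z) (del (size P) (rcons (rcons P w) z)).
Proof.
move=> Hs Hun Hwz.
have HsP : 0 < size (rcons P w) by rewrite size_rcons.
have [Hins Hdel] := HF Hs HsP Hun; rewrite size_rcons /= in Hins Hdel.
case EF: (F (rcons (rcons P w) z)) (Hdiag.2 P w z Hs Hun Hwz) => [|v|] // _.
- by left; exists v; exact: (proj2 (Hins v) EF).
- by right; exact: (proj2 Hdel EF).
Qed.

Lemma insert_pos_of_deleted x m d c u : M x (del m x) -> m.+1 < size x ->
  0 < d <= m.+1 -> d.+1 < size x -> len e (del d x) = len e x ->
  c < (size x).-1 -> M (ins c u (del d x)) (del d x) -> c = d.-1.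
Proof.
move=> Hx Hm Hdm Hd Hlen Hc Hb.
have [Hsx _ _] := matching_gedge HM Hx.
have [Hs_ins Hsb _] := matching_gedge HM Hb.
have [Hd0 _] := andP Hdm.
have [P [w [y [z [Q [Ex HsP]]]]]] := seq_split3 Hd0 Hd.
have Ed : d = (size P).+1 by lia.
have Eb : del d x = P ++ w :: z :: Q by rewrite Ex Ed del_size_cat.
have Hun : has_state M (rcons P w) (Unmatched T).
  rewrite -(take_size_cat P w (y :: z :: Q)) -Ex -Ed.
  exact: (delete_state_unmatched_prefix HM Hx Hm Hdm).
have [Hwy Hyz] : w != y /\ y != z.
  by move: Hsx; rewrite Ex => /andP [_ /cat_sorted2 [_]] /= /andP [-> /andP [-> _]].
(* deleting y keeps the length, so y lies on a geodesic from w to z *)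
have Hwz : 2 <= dist e w z.
  have Hdist : dist e w z = dist e w y + dist e y z.
    by move: Hlen; rewrite Eb Ex !len_cat /=; lia.
  by rewrite Hdist; have := dist_gt0 e Hwy; have := dist_gt0 e Hyz; lia.
have Hs : isseq (rcons (rcons P w) z).
  by rewrite -(take_size_cat2 P w z Q) -Eb; apply: isseq_take.
have Hsize_s : (size P).+2 <= size (rcons (rcons P w) z) by rewrite !size_rcons.
have Htake : take (size P).+2 (del d x) = take (size P).+2 (rcons (rcons P w) z).
  by rewrite Eb take_size_cat2 take_oversize // !size_rcons.
have Hsize_b : size (del d x) = (size x).-1 by rewrite size_del; lia.
case: (diagonal_matched Hs Hun Hwz) => [[v Hv] | Hdel_s].
- have Hbv := insert_state_prefix HM Hv Hsize_s Hsb Htake.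
  have Hc' : c < size (del d x) by rewrite Hsize_b.
  have HP' : size P < size (del d x) by rewrite Hsize_b; lia.
  by have := ins_inj Hs_ins Hc' HP' (matching_tgt_inj HM Hb Hbv); lia.
- exfalso; exact: (matching_no_chain HM Hb (delete_state_prefix HM Hdel_s Hsize_s Hsb Htake)).
Qed.

End DiagonalRule.

Theorem lemma3p7 (T : finType) (e : rel T) (F : seq T -> rule T)
    (M : rel (seq T)) (k l p : nat) (a b : nat -> seq T)
    (c d : nat -> nat) (u : nat -> T) :
  simple_connected_graph e ->
  prefix_matching e M -> generated_by F M -> diagonal e F M ->
  0 < k -> 0 < p -> a p = a 0 ->
  (forall i, i < p ->
     [/\ inI e k l (a i), inI e k.-1 l (b i),
         gedge e (a i) (b i), ~ M (a i) (b i) & M (a i.+1) (b i)]) ->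
  (forall i, i < p -> [/\ 0 < d i, d i < k & b i = del (d i) (a i)]) ->
  (forall i, i < p -> (c i).+1 < k /\ a i.+1 = ins (c i) (u i) (b i)) ->
  forall i, i < p -> d i = (c i).+1.
Proof.
move=> _ HM HF Hdiag _ Hp Ep Hcyc Hdel Hins i Hi.
have [y Hay] : exists y, M (a i) y.
  case: i Hi => [|j] Hj.
  - have Hp1 : p.-1 < p by rewrite ltn_predL.
    have [_ _ _ _ Hab] := Hcyc p.-1 Hp1.
    by rewrite prednK // Ep in Hab; exists (b p.-1).
  - by have [_ _ _ _ Hab] := Hcyc j (ltnW Hj); exists (b j).
have [_ _ [m [_ Hm Ey _]]] := matching_gedge HM Hay; rewrite Ey in Hay.
have [/and3P [_ /eqP Hsa /eqP Hla] /and3P [_ _ /eqP Hlb] _ _ HMb] := Hcyc i Hi.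
have [Hd0 Hdk Eb] := Hdel i Hi.
have [Hck Ea] := Hins i Hi.
rewrite Ea Eb in HMb; rewrite Eb in Hlb.
have Hdm : d i <= m.+1 by apply: (delete_target_le HM Hay _ _ HMb); lia.
suff -> : c i = (d i).-1 by lia.
apply: (insert_pos_of_deleted HM HF Hdiag Hay _ _ _ _ _ HMb);
  by rewrite ?Hsa ?Hla ?Hlb ?Hd0 ?Hdm //; lia.
Qed.
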